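(* Let $(\alpha_0,x_0)$ be a pointed transitive pre-action of $\Gamma=\mathrm{BS}(m,n)$ and let $\alpha$ be its maximal forest saturation. Then $\mathrm{Stab}_\alpha(x_0)=\mathrm{Stab}_{\alpha_0}(x_0)$. In particular the action $\alpha$ is isomorphic (as a pointed action) to $\mathrm{Stab}_{\alpha_0}(x_0)\backslash\Gamma\curvearrowleft\Gamma$ with basepoint the trivial coset.
   Context: $\mathrm{BS}(m,n)=\langle b,t\mid tb^mt^{-1}=b^n\rangle$, $|m|,|n|\ge2$; maps act on the right. A pre-action is $(X,\beta,\tau)$ with $\beta$ a bijection of $X$, $\tau$ a partial bijection, $\mathrm{dom}(\tau)$ $\beta^n$-invariant, $\mathrm{rng}(\tau)$ $\beta^m$-invariant, and $x\tau\beta^m=x\beta^n\tau$ on $\mathrm{dom}(\tau)$; saturated means $\mathrm{dom}(\tau)=\mathrm{rng}(\tau)=X$ (a genuine action). Schreier graph $\mathrm{Sch}(\alpha)$: vertices $X$, $b$-edges $x\to x\beta$ and $t$-edges $x\to x\tau$ ($x\in\mathrm{dom}\tau$), with opposite inverse-labelled edges; transitive means connected. For a path $c$, $\Psi(c)\in\Gamma$ is the element represented by its label; $\mathrm{Stab}_\alpha(x_0)=\Psi(\pi_1(\mathrm{Sch}(\alpha),x_0))$ (for a saturated pre-action this is the usual stabilizer). Bass–Serre graph $\mathrm{BS}(\alpha)$: vertices are $\beta$-orbits, positive edges are $\beta^n$-orbits in $\mathrm{dom}(\tau)$ (the edge $x\langle\beta^n\rangle$ goes from $x\langle\beta\rangle$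 to $x\tau\langle\beta\rangle$), negative edges are $\beta^m$-orbits in $\mathrm{rng}(\tau)$ (opposites); labels are cardinalities. A maximal forest saturation of $\alpha_0$ is a saturated pre-action $\alpha$ extending $\alpha_0$ such that in $\mathrm{BS}(\alpha)$: the subgraph induced on old vertices is $\mathrm{BS}(\alpha_0)$, the subgraph induced on new vertices is a forest, each forest component is attached to $\mathrm{BS}(\alpha_0)$ by a single pair of opposite edges, and each new vertex $v'$ with parent $v$ (neighbour closer to $\mathrm{BS}(\alpha_0)$) has label $L(v')=|m|L(v)/\gcd(L(v),n)$ if the edge from $v$ to $v'$ is positive and $L(v')=|n|L(v)/\gcd(L(v),m)$ if negative (with $\gcd(\infty,k)=|k|$, $\infty$ labels stay $\infty$). It is unique up to isomorphism fixing $\alpha_0$. *)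

From mathcomp Require Import all_boot all_order all_algebra.
Set Implicit Arguments.
Unset Strict Implicit.
Unset Printing Implicit Defensive.

Inductive letter := Lb | Lbi | Lt | Lti.

Definition linv (l : letter) : letter :=
  match l with Lb => Lbi | Lbi => Lb | Lt => Lti | Lti => Lt end.

Definition winv (w : seq letter) : seq letter := rev (map linv w).

Definition powb (k : int) : seq letter :=
  match k with Posz j => nseq j Lb | Negz j => nseq j.+1 Lbi end.

(* Equality in BS(m,n) = <b,t | t b^m t^-1 = b^n>: the smallest congruence on
   words containing free cancellation and the defining relation. *)
Inductive bs_eq (m n : int) : seq letter -> seq letter -> Prop :=
| bs_refl w : bs_eq m n w w
| bs_sym w w' : bs_eq m n w w' -> bs_eq m n w' w
| bs_trans w1 w2 w3 : bs_eq m n w1 w2 -> bs_eq m n w2 w3 -> bs_eq m n w1 w3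
| bs_ctx u v w w' : bs_eq m n w w' -> bs_eq m n (u ++ w ++ v) (u ++ w' ++ v)
| bs_free l : bs_eq m n [:: l; linv l] [::]
| bs_rel : bs_eq m n (Lt :: powb m ++ [:: Lti]) (powb n).

Definition bpow {X : Type} (b bi : X -> X) (k : int) (x : X) : X :=
  match k with Posz j => iter j b x | Negz j => iter j.+1 bi x end.

Definition in_dom {X : Type} (t : X -> option X) (x : X) : Prop :=
  exists y, t x = Some y.
Definition in_rng {X : Type} (t : X -> option X) (y : X) : Prop :=
  exists x, t x = Some y.

(* A pre-action (X, beta, tau): beta a bijection (pa_b with inverse pa_bi),
   tau a partial bijection (pa_t x = Some y means x tau = y). *)
Record preaction (m n : int) (X : Type) := PreAction {
  pa_b : X -> X;
  pa_bi : X -> X;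
  pa_t : X -> option X;
  pa_bK : cancel pa_b pa_bi;
  pa_biK : cancel pa_bi pa_b;
  pa_t_inj : forall x y z, pa_t x = Some z -> pa_t y = Some z -> x = y;
  pa_dom_inv : forall x, in_dom pa_t x <-> in_dom pa_t (bpow pa_b pa_bi n x);
  pa_rng_inv : forall y, in_rng pa_t y <-> in_rng pa_t (bpow pa_b pa_bi m y);
  pa_comm : forall x y, pa_t x = Some y ->
     pa_t (bpow pa_b pa_bi n x) = Some (bpow pa_b pa_bi m y)
}.

Section PreActionDefs.
Variables (m n : int).

Definition saturated {X : Type} (a : preaction m n X) : Prop :=
  forall x, in_dom (pa_t a) x /\ in_rng (pa_t a) x.

Definition sch_step {X : Type} (a : preaction m n X) (x : X) (l : letter) (y : X)
  : Prop :=
  match l with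
  | Lb => y = pa_b a x
  | Lbi => y = pa_bi a x
  | Lt => pa_t a x = Some y
  | Lti => pa_t a y = Some x
  end.

Inductive walk {X : Type} (a : preaction m n X) : X -> seq letter -> X -> Prop :=
| walk_nil x : walk a x [::] x
| walk_cons x l x' w y : sch_step a x l x' -> walk a x' w y -> walk a x (l :: w) y.

Definition transitive_pa {X : Type} (a : preaction m n X) : Prop :=
  forall x y, exists w, walk a x w y.

(* Stab_a(x0) = Psi(pi_1(Sch(a), x0)), as a set of elements of BS(m,n)
   (an element is given by any word representing it). *)
Definition stab {X : Type} (a : preaction m n X) (x0 : X) (g : seq letter) : Prop :=
  exists w, walk a x0 w x0 /\ bs_eq m n g w.

Definition extends {X0 X : Type} (a0 : preaction m n X0) (a : preaction m n X)
  (iota : X0 -> X) : Prop :=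
  injective iota /\
  (forall x, iota (pa_b a0 x) = pa_b a (iota x)) /\
  (forall x y, pa_t a0 x = Some y -> pa_t a (iota x) = Some (iota y)).

(* vertices: beta-orbits *)
Definition same_orbit {X : Type} (a : preaction m n X) (x y : X) : Prop :=
  exists k : int, y = bpow (pa_b a) (pa_bi a) k x.

(* Edges are encoded as (s, x) with x in dom(tau): (true, x) is the positive
   edge x<beta^n> from x<beta> to x tau<beta>; (false, x) is its opposite, the
   negative edge (x tau)<beta^m> from x tau<beta> to x<beta>. *)
Definition edge (X : Type) := (bool * X)%type.

Definition tval {X : Type} (a : preaction m n X) (x : X) : X := odflt x (pa_t a x).

Definition valid_edge {X : Type} (a : preaction m n X) (e : edge X) : Prop :=
  in_dom (pa_t a) e.2.
Definition orig {X : Type} (a : preaction m n X) (e : edge X) : X :=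
  if e.1 then e.2 else tval a e.2.
Definition targ {X : Type} (a : preaction m n X) (e : edge X) : X :=
  if e.1 then tval a e.2 else e.2.
Definition opp {X : Type} (e : edge X) : edge X := (~~ e.1, e.2).
(* equality of edges: same sign and same beta^n-orbit
   (for negative edges this is equivalent to same beta^m-orbit of x tau) *)
Definition edge_eq {X : Type} (a : preaction m n X) (e f : edge X) : Prop :=
  e.1 = f.1 /\ exists k : int, f.2 = bpow (pa_b a) (pa_bi a) (k * n)%R e.2.

Definition old_v {X0 X : Type} (a : preaction m n X) (iota : X0 -> X) (x : X)
  : Prop := exists y0, same_orbit a x (iota y0).
Definition new_v {X0 X : Type} (a : preaction m n X) (iota : X0 -> X) (x : X)
  : Prop := ~ old_v a iota x.

(* e :: es is a reduced path (no backtracking) in the Bass-Serre graph;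
   the validity of e itself is required separately *)
Fixpoint rpath {X : Type} (a : preaction m n X) (e : edge X) (es : seq (edge X))
  : Prop :=
  match es with
  | [::] => True
  | f :: es' => valid_edge a f /\ same_orbit a (targ a e) (orig a f) /\
                ~ edge_eq a (opp e) f /\ rpath a f es'
  end.

Definition allS {A : Type} (P : A -> Prop) (s : seq A) : Prop :=
  foldr (fun x acc => P x /\ acc) True s.

Inductive new_conn {X0 X : Type} (a : preaction m n X) (iota : X0 -> X)
  : X -> X -> Prop :=
| nc_refl x y : same_orbit a x y -> new_conn a iota x y
| nc_step x e y : valid_edge a e -> same_orbit a x (orig a e) ->
     new_v a iota (targ a e) -> new_conn a iota (targ a e) y ->
     new_conn a iota x y.

(* vertex labels: cardinality of the beta-orbit (finite k, or infinite) *)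
Definition fin_lab {X : Type} (a : preaction m n X) (x : X) (k : nat) : Prop :=
  (0 < k)%N /\ iter k (pa_b a) x = x /\
  forall j, (0 < j)%N -> (j < k)%N -> iter j (pa_b a) x <> x.
Definition inf_lab {X : Type} (a : preaction m n X) (x : X) : Prop :=
  forall k, (0 < k)%N -> iter k (pa_b a) x <> x.

Definition child_lab (pos : bool) (k : nat) : nat :=
  if pos then (absz m * k) %/ gcdn k (absz n) else (absz n * k) %/ gcdn k (absz m).

Definition max_forest_saturation {X0 X : Type} (a0 : preaction m n X0)
  (a : preaction m n X) (iota : X0 -> X) : Prop :=
  saturated a /\ extends a0 a iota /\
  (* subgraph induced on old vertices is BS(a0): no new edge between old vertices *)
  (forall x, in_dom (pa_t a) x -> old_v a iota x -> old_v a iota (tval a x) ->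
     exists y0, in_dom (pa_t a0) y0 /\ edge_eq a (true, x) (true, iota y0)) /\
  (* subgraph induced on new vertices is a forest: no closed reduced path of
     positive length through new vertices *)
  (forall e es, valid_edge a e -> rpath a e es ->
     new_v a iota (orig a e) -> allS (fun f => new_v a iota (targ a f)) (e :: es) ->
     ~ same_orbit a (targ a (last e es)) (orig a e)) /\
  (* each component is attached to BS(a0) by a single pair of opposite edges *)
  (forall v, new_v a iota v ->
     (exists e, valid_edge a e /\ old_v a iota (orig a e) /\ new_conn a iota v (targ a e)) /\
     (forall e e', valid_edge a e -> valid_edge a e' ->
        old_v a iota (orig a e) -> old_v a iota (orig a e') ->
        new_conn a iota v (targ a e) -> new_conn a iota v (targ a e') ->
        edge_eq a e e')) /\
  (* label rule: along every reduced path leaving BS(a0) into the forest, the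
     last edge goes from the parent v to the child v' *)
  (forall e es, valid_edge a e -> rpath a e es -> old_v a iota (orig a e) ->
     allS (fun f => new_v a iota (targ a f)) (e :: es) ->
     let f := last e es in
     (inf_lab a (orig a f) -> inf_lab a (targ a f)) /\
     (forall k, fin_lab a (orig a f) k -> fin_lab a (targ a f) (child_lab f.1 k))).

End PreActionDefs.

(* Every walk in Sch(alpha) between points of X0 can be pushed into Sch(alpha0)
   without changing the element of Gamma it represents, by induction on the
   number of t-letters.  A t-edge between two old beta-orbits is, up to powers
   of beta, an edge of alpha0, and t = b^(kn) t b^(-km) in Gamma.  A t-edge into
   a new orbit starts an excursion into a tree of the forest, which is attached
   by a single pair of opposite edges, so the excursion leaves through the
   opposite edge.  Inside the tree the excursion backtracks, t b^i t^-1 or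
   t^-1 b^i t; the label rule makes the beta-period of the vertex entered
   divisible by m (resp. n), so i is a multiple of m (resp. n) and the backtrack
   is a power of b in Gamma.  Removing backtracks collapses the excursion to a
   power of b.  Transitivity of alpha0 and the attachment of every tree to
   BS(alpha0) then make g |-> x0 g a bijection from Stab(x0)\Gamma onto X. *)
From Pilot Require Import Defs.
From mathcomp Require Import all_boot all_order all_algebra zify.
From Stdlib Require Import ClassicalEpsilon Classical.
Set Implicit Arguments.
Unset Strict Implicit.
Unset Printing Implicit Defensive.
Import GRing.Theory Num.Theory.
Local Open Scope ring_scope.

Section BpowTheory.
Variables (X : Type) (b bi : X -> X) (bK : cancel b bi) (biK : cancel bi b).
Local Notation bp := (bpow b bi).

Lemma bpowS k x : bp (k + 1) x = b (bp k x).
Proof.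
case: k => [j|[|j]]; first by have -> : Posz j + 1 = Posz j.+1 by lia.
  by rewrite /= biK.
have -> : Negz j.+1 + 1 = Negz j by lia.
by rewrite /= biK.
Qed.

Lemma bpow_sub1 k x : bp (k - 1) x = bi (bp k x).
Proof. by rewrite -[in RHS](subrK 1 k) bpowS bK. Qed.

Lemma bpowD i j x : bp (i + j) x = bp j (bp i x).
Proof.
elim/int_ind: j => [|j IH|j IH]; first by rewrite addr0.
  have -> : Posz j.+1 = Posz j + 1 by lia.
  by rewrite addrA !bpowS IH.
have -> : - Posz j.+1 = - Posz j - 1 by lia.
by rewrite addrA !bpow_sub1 IH.
Qed.

End BpowTheory.

Section WordTheory.
Variables (m n : int).
Local Notation "u ≡ v" := (bs_eq m n u v) (at level 70).

Lemma bs_catl u u' v : u ≡ u' -> u ++ v ≡ u' ++ v.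
Proof. by move=> h; have := bs_ctx [::] v h. Qed.

Lemma bs_catr u v v' : v ≡ v' -> u ++ v ≡ u ++ v'.
Proof. by move=> h; have := bs_ctx u [::] h; rewrite !cats0. Qed.

Lemma bs_cat u u' v v' : u ≡ u' -> v ≡ v' -> u ++ v ≡ u' ++ v'.
Proof. by move=> h1 h2; apply: bs_trans (bs_catl _ h1) (bs_catr _ h2). Qed.

Lemma bs_cons l v v' : v ≡ v' -> l :: v ≡ l :: v'.
Proof. exact: (bs_catr [:: l]). Qed.

Lemma bs_cancel u l v : u ++ l :: linv l :: v ≡ u ++ v.
Proof. by have := bs_ctx u v (bs_free m n l). Qed.

Lemma powbS k : powb (k + 1) ≡ powb k ++ [:: Lb].
Proof.
case: k => [j|[|j]].
- have -> : Posz j + 1 = Posz j.+1 by lia.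
  by rewrite /powb -addn1 nseqD; apply: bs_refl.
- exact: bs_sym (bs_free m n Lbi).
- have -> : Negz j.+1 + 1 = Negz j by lia.
  apply: bs_sym; have := bs_cancel (nseq j.+1 Lbi) Lbi [::].
  have -> : nseq j.+1 Lbi ++ [:: Lbi; Lb] = powb (Negz j.+1) ++ [:: Lb].
    by rewrite /powb -[j.+2]addn1 nseqD -catA.
  by rewrite cats0.
Qed.

Lemma powb_sub1 k : powb (k - 1) ≡ powb k ++ [:: Lbi].
Proof.
apply: bs_sym; have := bs_catl [:: Lbi] (powbS (k - 1)); rewrite subrK.
move/bs_trans; apply; have := bs_cancel (powb (k - 1)) Lb [::].
by rewrite cats0 -catA.
Qed.

Lemma powbD i j : powb (i + j) ≡ powb i ++ powb j.
Proof.
elim/int_ind: j => [|j IH|j IH]; first by rewrite addr0 cats0; apply: bs_refl.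
  have -> : Posz j.+1 = Posz j + 1 by lia.
  rewrite addrA; apply: bs_trans (powbS _) _.
  apply: bs_trans (bs_catl _ IH) _; rewrite -catA.
  exact/bs_catr/bs_sym/powbS.
have -> : - Posz j.+1 = - Posz j - 1 by lia.
rewrite addrA; apply: bs_trans (powb_sub1 _) _; apply: bs_trans (bs_catl _ IH) _.
by rewrite -catA; apply/bs_catr/bs_sym/powb_sub1.
Qed.

Lemma powbNr k : powb k ++ powb (- k) ≡ [::].
Proof. by apply: bs_sym; apply: bs_trans (powbD _ _); rewrite subrr; apply: bs_refl. Qed.

Definition conj_t u := Lt :: u ++ [:: Lti].
Definition conj_ti u := Lti :: u ++ [:: Lt].

Lemma conj_t_cat u v : conj_t (u ++ v) ≡ conj_t u ++ conj_t v.
Proof. by rewrite /conj_t /= -!catA; apply/bs_cons/bs_sym/bs_cancel. Qed.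

Lemma conj_t_cong u v : u ≡ v -> conj_t u ≡ conj_t v.
Proof. by move=> h; apply/bs_cons/bs_catl. Qed.

Lemma conj_ti_cong u v : u ≡ v -> conj_ti u ≡ conj_ti v.
Proof. by move=> h; apply/bs_cons/bs_catl. Qed.

Lemma conj_tiK u : conj_ti (conj_t u) ≡ u.
Proof.
rewrite /conj_ti /conj_t /= -catA /=.
apply: bs_trans (bs_cancel [::] Lti (u ++ [:: Lti; Lt])) _.
by have := bs_cancel u Lti [::]; rewrite cats0.
Qed.

Lemma conj_t_powbN x y : conj_t (powb x) ≡ powb y -> conj_t (powb (- x)) ≡ powb (- y).
Proof.
move=> hxy; set c := conj_t (powb (- x)).
have e1 : c ≡ c ++ powb y ++ powb (- y).
  by have := bs_catr c (powbNr y); rewrite cats0 => /bs_sym.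
apply: bs_trans e1 _; rewrite catA; apply: (@bs_catl _ [::]).
apply: bs_trans (bs_catr _ (bs_sym hxy)) _.
apply: bs_trans (bs_sym (conj_t_cat _ _)) _.
have := powbNr (- x); rewrite opprK => /conj_t_cong /bs_trans; apply.
exact: bs_free m n Lt.
Qed.

Lemma conj_t_powb k : conj_t (powb (m * k)) ≡ powb (n * k).
Proof.
wlog k_ge0 : k / 0 <= k.
  move=> hwlog; have [/hwlog //|k_lt0] := lerP 0 k.
  have := @conj_t_powbN _ _ (hwlog (- k) _); rewrite !mulrN !opprK; apply; lia.
case: k k_ge0 => // j _; elim: j => [|j IH]; first by rewrite !mulr0; exact: bs_free m n Lt.
have -> : Posz j.+1 = Posz j + 1 by lia.
rewrite !mulrDr !mulr1.
apply: bs_trans (conj_t_cong (powbD _ _)) _.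
apply: bs_trans (conj_t_cat _ _) _.
exact: bs_trans (bs_cat IH (bs_rel m n)) (bs_sym (powbD _ _)).
Qed.

Lemma conj_ti_powb k : conj_ti (powb (n * k)) ≡ powb (m * k).
Proof. exact: bs_trans (conj_ti_cong (bs_sym (conj_t_powb k))) (conj_tiK _). Qed.

Lemma Lt_conj k : [:: Lt] ≡ powb (k * n) ++ Lt :: powb (- (k * m)).
Proof.
apply: bs_sym; rewrite mulrC [k * m]mulrC.
apply: bs_trans (bs_catl _ (bs_sym (conj_t_powb k))) _.
rewrite /conj_t /= -catA /=.
apply: bs_trans (bs_cons _ (bs_cancel (powb (m * k)) Lti _)) _.
exact/bs_cons/powbNr.
Qed.

Lemma Lti_conj k : [:: Lti] ≡ powb (k * m) ++ Lti :: powb (- (k * n)).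
Proof.
apply: bs_sym; rewrite mulrC [k * n]mulrC.
apply: bs_trans (bs_catl _ (bs_sym (conj_ti_powb k))) _.
rewrite /conj_ti /= -catA /=.
apply: bs_trans (bs_cons _ (bs_cancel (powb (n * k)) Lt _)) _.
exact/bs_cons/powbNr.
Qed.

End WordTheory.

Definition is_t (l : letter) : bool :=
  match l with Lt | Lti => true | _ => false end.
Definition tfree (w : seq letter) : bool := all (fun l => ~~ is_t l) w.

Fixpoint bsum (w : seq letter) : int :=
  if w is l :: w' then (match l with Lb => 1 | Lbi => -1 | _ => 0 end) + bsum w' else 0.

Lemma tfree_bs m n w : tfree w -> bs_eq m n w (powb (bsum w)).
Proof.
elim: w => [|l w IH] /=; first by move=> _; apply: bs_refl.
by case: l => //= /IH h; apply: bs_trans (bs_cons _ h) _; apply: bs_sym;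
  [apply: (powbD m n 1) | apply: (powbD m n (-1))].
Qed.

Lemma tfree_powb j : tfree (powb j).
Proof. by case: j => k; elim: k => //= k ->. Qed.

Lemma tfree_count w : tfree w -> count is_t w = 0%N.
Proof. by elim: w => //= l w IH /andP [/negbTE -> /IH ->]. Qed.

Lemma walk_cat m n Y (c : preaction m n Y) x u y v z :
  walk c x u y -> walk c y v z -> walk c x (u ++ v) z.
Proof. by elim=> // x1 l x2 w y1 hs _ IH /IH; apply: walk_cons. Qed.

Lemma walk_powb m n Y (c : preaction m n Y) k x :
  walk c x (powb k) (bpow (pa_b c) (pa_bi c) k x).
Proof.
have walk_nseq l f : (forall y, sch_step c y l (f y)) ->
    forall j y, walk c y (nseq j l) (iter j f y).
  move=> hf; elim=> [|j IH] y; first exact: walk_nil.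
  by rewrite iterSr; apply: walk_cons (hf y) (IH _).
by case: k => j; apply: walk_nseq.
Qed.

Section SaturatedAction.
Variables (m n : int) (X : Type) (a : preaction m n X) (sat : saturated a).
Local Notation bp := (bpow (pa_b a) (pa_bi a)).
Local Notation so := (same_orbit a).
Local Notation tval := (Defs.tval a).
Local Notation opp := (@Defs.opp X).
Local Notation "u ≡ v" := (bs_eq m n u v) (at level 70).

Lemma bpD i j x : bp (i + j) x = bp j (bp i x).
Proof. exact/bpowD/pa_biK/pa_bK. Qed.

Lemma bpK i x : bp (- i) (bp i x) = x.
Proof. by rewrite -bpD addrN. Qed.

Lemma tvalP x : pa_t a x = Some (tval x).
Proof. by rewrite /Defs.tval; case: (sat x) => [[y ->]]. Qed.

Definition tinv (x : X) : X :=
  proj1_sig (constructive_indefinite_description _ (proj2 (sat x))).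

Lemma tinvP x : pa_t a (tinv x) = Some x.
Proof. by rewrite /tinv; case: constructive_indefinite_description. Qed.

Lemma tvalK : cancel tval tinv.
Proof. by move=> x; apply: pa_t_inj (tinvP _) (tvalP x). Qed.

Lemma tinvK : cancel tinv tval.
Proof. by move=> x; have := tinvP x; rewrite tvalP => -[]. Qed.

Definition actl (x : X) (l : letter) : X :=
  match l with Lb => pa_b a x | Lbi => pa_bi a x | Lt => tval x | Lti => tinv x end.
Definition act (x : X) (w : seq letter) : X := foldl actl x w.

Lemma act_cat x u v : act x (u ++ v) = act (act x u) v.
Proof. exact: foldl_cat. Qed.

Lemma actlK x l : actl (actl x l) (linv l) = x.
Proof. by case: l; [apply: pa_bK | apply: pa_biK | apply: tvalK | apply: tinvK]. Qed.

Lemma sch_step_act x l y : sch_step a x l y <-> y = actl x l.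
Proof.
split; last by move=> ->; case: l => //=; [apply: tvalP | apply: tinvP].
case: l => //= h; first by move: h; rewrite tvalP => -[].
exact: pa_t_inj h (tinvP x).
Qed.

Lemma walk_act x w y : walk a x w y <-> y = act x w.
Proof.
split; first by elim=> [//|x' l x'' w' y' /sch_step_act -> _ ->].
move=> ->; elim: w x => [|l w IH] x; first exact: walk_nil.
exact: walk_cons (proj2 (sch_step_act _ _ _) erefl) (IH _).
Qed.

Lemma act_powb k x : act x (powb k) = bp k x.
Proof. by apply/esym/walk_act/walk_powb. Qed.

Lemma act_winv x w : act (act x w) (winv w) = x.
Proof.
elim: w x => [|l w IH] x //=.
by rewrite /winv /= rev_cons -cats1 act_cat -/(winv w) IH /= actlK.
Qed.

Lemma winvK : involutive winv.
Proof.
by move=> w; rewrite /winv map_rev revK -map_comp -[RHS]map_id; apply: eq_map => -[].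
Qed.

Lemma act_winvV x w : act (act x (winv w)) w = x.
Proof. by rewrite -{2}(winvK w) act_winv. Qed.

Lemma tval_bpow_mul k x : tval (bp (k * n) x) = bp (k * m) (tval x).
Proof.
have tval_n y : tval (bp n y) = bp m (tval y).
  by have := pa_comm (tvalP y); rewrite tvalP => -[].
elim/int_ind: k => [|k IH|k IH]; first by rewrite !mul0r.
  have -> : Posz k.+1 = Posz k + 1 by lia.
  by rewrite !mulrDl !mul1r !bpD tval_n IH.
have -> : - Posz k.+1 = - Posz k - 1 by lia.
rewrite !mulrDl !mulN1r.
have := tval_n (bp (- Posz k * n - n) x); rewrite -bpD addrNK IH => h.
by rewrite [in RHS]bpD h bpK.
Qed.

Lemma tinv_bpow_mul k y : tinv (bp (k * m) y) = bp (k * n) (tinv y).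
Proof. by apply: (can_inj tvalK); rewrite tinvK tval_bpow_mul tinvK. Qed.

Lemma act_bs_eq w w' : w ≡ w' -> forall x, act x w = act x w'.
Proof.
elim=> //.
- by move=> w1 w2 w3 _ h1 _ h2 x; rewrite h1 h2.
- by move=> u v w1 w2 _ h x; rewrite !act_cat h.
- by move=> l x; rewrite /act /= -/(actl _ _) actlK.
move=> x; rewrite /= act_cat act_powb /= act_powb.
by have := tinv_bpow_mul 1 (tval x); rewrite !mul1r tvalK.
Qed.

Lemma same_orbit_refl x : so x x. Proof. by exists 0. Qed.

Lemma same_orbit_sym x y : so x y -> so y x.
Proof. by case=> k ->; exists (- k); rewrite bpK. Qed.

Lemma same_orbit_trans x y z : so x y -> so y z -> so x z.
Proof. by case=> k -> [j ->]; exists (k + j); rewrite bpD. Qed.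

Lemma same_orbit_actl x l : ~~ is_t l -> so x (actl x l).
Proof. by case: l => // _; [exists 1 | exists (-1)]. Qed.

Lemma tfree_act w x : tfree w -> act x w = bp (bsum w) x.
Proof. by elim: w x => [|[] w IH] x //= /IH; rewrite -/(act _ _) bpD => ->. Qed.

Lemma tfree_same_orbit w x : tfree w -> so x (act x w).
Proof. by move/tfree_act->; exists (bsum w). Qed.

Definition letter_edge (x : X) (l : letter) : edge X :=
  if l is Lti then (false, tinv x) else (true, x).

Fixpoint walk_edges (x : X) (w : seq letter) : seq (edge X) :=
  if w is l :: w' then
    let es := walk_edges (actl x l) w' in if is_t l then letter_edge x l :: es else es
  else [::].

Fixpoint all_visited (P : X -> Prop) (x : X) (w : seq letter) : Prop :=
  P x /\ (if w is l :: w' then all_visited P (actl x l) w' else True).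

Lemma valid_edgeT e : valid_edge a e.
Proof. exact: proj1 (sat _). Qed.

Lemma orig_letter_edge x l : is_t l -> orig a (letter_edge x l) = x.
Proof. by case: l => //= _; apply: tinvK. Qed.

Lemma targ_letter_edge x l : is_t l -> targ a (letter_edge x l) = actl x l.
Proof. by case: l. Qed.

Lemma orig_opp e : orig a (opp e) = targ a e.
Proof. by case: e => -[]. Qed.

Lemma targ_opp e : targ a (opp e) = orig a e.
Proof. by case: e => -[]. Qed.

Lemma oppK : involutive opp.
Proof. by case=> -[]. Qed.

Lemma edge_eq_opp e f : edge_eq a e f -> edge_eq a (opp e) (opp f).
Proof. by case=> /= h1 h2; split; rewrite //= h1. Qed.

Lemma edge_eq_targ e f : edge_eq a e f -> so (targ a e) (targ a f).
Proof.
case: e f => [[] x] [s y] [/= <- [k ->]]; last by exists (k * n).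
by rewrite /targ /= tval_bpow_mul; exists (k * m).
Qed.

Lemma walk_edges_cat x u v :
  walk_edges x (u ++ v) = walk_edges x u ++ walk_edges (act x u) v.
Proof. by elim: u x => [|l u IH] x //=; case: (is_t l); rewrite IH. Qed.

Lemma walk_edges_nil x w : walk_edges x w = [::] -> tfree w.
Proof. by elim: w x => [|[] w IH] x //= /IH. Qed.

Lemma walk_edges_last w : forall q f fs, walk_edges q w = f :: fs ->
  so (targ a (last f fs)) (act q w).
Proof.
elim: w => [|l w IH] q f fs //=.
case hl: (is_t l); last exact: IH.
case=> <- <-; case E: (walk_edges (actl q l) w) => [|g gs] /=; last exact: IH E.
by rewrite targ_letter_edge //; apply/tfree_same_orbit/(walk_edges_nil E).
Qed.

Lemma walk_edges_head w : forall q f fs, walk_edges q w = f :: fs ->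
  exists w0 l w', [/\ w = w0 ++ l :: w', tfree w0, is_t l, f = letter_edge (act q w0) l &
                     fs = walk_edges (actl (act q w0) l) w'].
Proof.
elim: w => [|l w IH] q f fs //=.
case hl: (is_t l); first by case=> <- <-; exists [::], l, w.
move=> /IH [w0 [l' [w' [-> h1 h2 h3 h4]]]].
by exists (l :: w0), l', w'; split => //=; rewrite hl.
Qed.

Lemma all_visited_head P x w : all_visited P x w -> P x.
Proof. by case: w => [|? ?] []. Qed.

Lemma all_visited_cat P x u v :
  all_visited P x (u ++ v) <-> all_visited P x u /\ all_visited P (act x u) v.
Proof.
elim: u x => [|l u IH] x /=; last by rewrite IH; tauto.
by split=> [h|[]//]; do !split=> //; apply: all_visited_head h.
Qed.

Lemma all_visited_last P x w : all_visited P x w -> P (act x w).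
Proof. by elim: w x => [|l w IH] x /= [] // _ /IH. Qed.

Lemma all_visited_tfree P x w : (forall y, so x y -> P y) -> tfree w -> all_visited P x w.
Proof.
elim: w x => [|l w IH] x hP /=; first by split=> //; apply/hP/same_orbit_refl.
case/andP=> hl hw; split; first exact/hP/same_orbit_refl.
apply: IH hw => y hy; apply/hP/(same_orbit_trans (same_orbit_actl _ hl) hy).
Qed.

Lemma all_visited_targ (P : X -> Prop) w : forall q, all_visited P q w ->
  allS (fun f => P (targ a f)) (walk_edges q w).
Proof.
elim: w => [|l w IH] q //= [_ hw].
case hl: (is_t l) => /=; last exact: IH.
by split; [rewrite targ_letter_edge //; apply: all_visited_head hw | apply: IH].
Qed.

Lemma bpow_period (L : nat) c x : iter L (pa_b a) x = x -> bp (Posz L * c) x = x.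
Proof.
move=> hL; have hN : bp (- Posz L) x = x by have := bpK (Posz L) x; rewrite [bp _ x]hL.
elim/int_ind: c => [|c IH|c IH]; first by rewrite mulr0.
  have -> : Posz c.+1 = Posz c + 1 by lia.
  by rewrite mulrDr mulr1 bpD IH.
have -> : - Posz c.+1 = - Posz c - 1 by lia.
by rewrite mulrDr mulrN1 bpD IH.
Qed.

Lemma fin_lab_dvd x L j : fin_lab a x L -> bp j x = x -> (Posz L %| j)%Z.
Proof.
case=> L_gt0 [hL hmin] hj.
have L_neq0 : Posz L != 0 by rewrite eqz_nat -lt0n.
have hr : bp (j %% Posz L)%Z x = x.
  by move: hj; rewrite {1}(divz_eq j (Posz L)) mulrC bpD bpow_period.
have lt_rL : (j %% Posz L)%Z < Posz L by apply: ltz_pmod; rewrite ltz_nat.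
apply/dvdz_mod0P; move: (modz_ge0 j L_neq0) lt_rL hr.
case: (j %% Posz L)%Z => [[|r]|r] // _ lt_rL hr.
by exfalso; apply: (hmin r.+1) => //; lia.
Qed.

Lemma inf_lab_fix x j : inf_lab a x -> bp j x = x -> j = 0.
Proof.
case: j => [[|j]|j] h hj //; first by case: (h j.+1 isT).
by have := bpK (Negz j) x; rewrite hj => /(h j.+1 isT).
Qed.

Lemma ex_minimal_nat (P : nat -> Prop) k :
  P k -> exists k0, P k0 /\ forall j, (j < k0)%N -> ~ P j.
Proof.
elim/ltn_ind: k => k IH hk.
case: (classic (exists j, (j < k)%N /\ P j)) => [[j [hj pj]]|hn]; first exact: IH hj pj.
by exists k; split=> // j hj pj; apply: hn; exists j.
Qed.

Lemma lab_cases x : (exists L, fin_lab a x L) \/ inf_lab a x.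
Proof.
case: (classic (exists k, (0 < k)%N /\ iter k (pa_b a) x = x)) => [[k hk]|hn];
  last by right=> k k_gt0 hx; apply: hn; exists k.
have [k0 [[k0_gt0 hk0] hmin]] :=
  @ex_minimal_nat (fun k => (0 < k)%N /\ iter k (pa_b a) x = x) k hk.
left; exists k0; split=> //; split=> // j j_gt0 j_lt hx.
exact: hmin j j_lt (conj j_gt0 hx).
Qed.

Lemma child_period_dvd f :
  (inf_lab a (orig a f) -> inf_lab a (targ a f)) ->
  (forall k, fin_lab a (orig a f) k -> fin_lab a (targ a f) (child_lab m n f.1 k)) ->
  forall j, bp j (targ a f) = targ a f -> ((if f.1 then m else n) %| j)%Z.
Proof.
move=> hinf hfin j hj; case: (lab_cases (orig a f)) => [[L /hfin hL]|/hinf hI].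
  apply: dvdz_trans (fin_lab_dvd hL hj); rewrite dvdzE /child_lab.
  by case: f.1; rewrite -muln_divA ?dvdn_gcdl // dvdn_mulr.
by rewrite (inf_lab_fix hI hj) dvdz0.
Qed.

Lemma backtrack p l1 i l2 : is_t l1 -> is_t l2 ->
  edge_eq a (opp (letter_edge p l1)) (letter_edge (bp i (actl p l1)) l2) ->
  (forall j, bp j (targ a (letter_edge p l1)) = targ a (letter_edge p l1) ->
     ((if (letter_edge p l1).1 then m else n) %| j)%Z) ->
  exists j0, actl (bp i (actl p l1)) l2 = bp j0 p /\ l1 :: powb i ++ [:: l2] ≡ powb j0.
Proof.
case: l1 => // _; case: l2 => // _ [//= _ [k hk]] hdvd.
- have hi : bp (i - k * m) (tval p) = tval p.
    by rewrite bpD -[bp i _]tinvK hk tval_bpow_mul bpK.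
  have /dvdzP [q hq] := hdvd _ hi.
  have {hq} -> : i = (q + k) * m by rewrite mulrDl -hq subrK.
  exists ((q + k) * n); rewrite /= tinv_bpow_mul tvalK; split=> //.
  by rewrite mulrC [_ * n]mulrC; apply: conj_t_powb.
- have hi : bp (i - k * n) (tinv p) = tinv p by rewrite bpD hk bpK.
  have /dvdzP [q hq] := hdvd _ hi.
  have {hq} -> : i = (q + k) * n by rewrite mulrDl -hq subrK.
  exists ((q + k) * m); rewrite /= tval_bpow_mul tinvK; split=> //.
  by rewrite mulrC [_ * m]mulrC; apply: conj_ti_powb.
Qed.

Lemma rpath_cons e q l es : is_t l -> so (targ a e) q ->
  ~ edge_eq a (opp e) (letter_edge q l) ->
  rpath a (letter_edge q l) es -> rpath a e (letter_edge q l :: es).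
Proof. by move=> hl hq hne hr; split; [apply: valid_edgeT | rewrite orig_letter_edge]. Qed.

Lemma first_backtrack w : forall q e, so (targ a e) q -> ~ rpath a e (walk_edges q w) ->
  (exists wb l2 w2, [/\ w = wb ++ l2 :: w2, tfree wb, is_t l2 &
     edge_eq a (opp e) (letter_edge (act q wb) l2)]) \/
  (exists w1 l1 wb l2 w2, [/\ w = w1 ++ l1 :: wb ++ l2 :: w2, tfree wb, is_t l1 && is_t l2,
     rpath a e (walk_edges q (w1 ++ [:: l1])) &
     edge_eq a (opp (letter_edge (act q w1) l1))
               (letter_edge (act (actl (act q w1) l1) wb) l2)]).
Proof.
elim: w => [|l w IH] q e hq hr; first by case: hr.
case hl: (is_t l); last first.
  have hr' : ~ rpath a e (walk_edges (actl q l) w) by rewrite /= hl in hr.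
  have hq' := same_orbit_trans hq (same_orbit_actl q (negbT hl)).
  case: (IH _ _ hq' hr') => [[wb [l2 [w2 [-> hwb hl2 he]]]] |
      [w1 [l1 [wb [l2 [w2 [-> hwb hl12 hrp he]]]]]]].
    by left; exists (l :: wb), l2, w2; rewrite /= hl.
  by right; exists (l :: w1), l1, wb, l2, w2; rewrite /= hl.
have [heq|hneq] := classic (edge_eq a (opp e) (letter_edge q l)).
  by left; exists [::], l, w.
have hr' : ~ rpath a (letter_edge q l) (walk_edges (actl q l) w).
  by move=> h; apply: hr; rewrite /= hl; apply: rpath_cons.
have hq' : so (targ a (letter_edge q l)) (actl q l).
  by rewrite targ_letter_edge //; apply: same_orbit_refl.
case: (IH _ _ hq' hr') => [[wb [l2 [w2 [-> hwb hl2 he]]]] |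
    [w1 [l1 [wb [l2 [w2 [-> hwb hl12 hrp he]]]]]]].
  by right; exists [::], l, wb, l2, w2; split; rewrite //= ?hl ?hl2 //; apply: rpath_cons.
by right; exists (l :: w1), l1, wb, l2, w2; split; rewrite //= hl; apply: rpath_cons.
Qed.

End SaturatedAction.

Section ForestSaturation.
Variables (m n : int) (X0 X : Type) (a0 : preaction m n X0) (a : preaction m n X)
  (iota : X0 -> X).
Hypothesis H : max_forest_saturation a0 a iota.
Let sat : saturated a := proj1 H.
Local Notation bp := (bpow (pa_b a) (pa_bi a)).
Local Notation bp0 := (bpow (pa_b a0) (pa_bi a0)).
Local Notation so := (same_orbit a).
Local Notation tval := (Defs.tval a).
Local Notation opp := (@Defs.opp X).
Local Notation ep := (act sat).
Local Notation st := (actl sat).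
Local Notation oldv := (old_v a iota).
Local Notation newv := (new_v a iota).
Local Notation "u ≡ v" := (bs_eq m n u v) (at level 70).

Lemma iota_inj : injective iota. Proof. by case: H => _ [[]]. Qed.

Lemma iota_b x : iota (pa_b a0 x) = pa_b a (iota x).
Proof. by case: H => _ [[_ []]]. Qed.

Lemma iota_t x y : pa_t a0 x = Some y -> pa_t a (iota x) = Some (iota y).
Proof. by case: H => _ [[_ [_ h]] _]; apply: h. Qed.

Lemma iota_bi x : iota (pa_bi a0 x) = pa_bi a (iota x).
Proof. by apply: (can_inj (pa_bK a)); rewrite -iota_b (pa_biK a0) (pa_biK a). Qed.

Lemma iota_bpow k x : iota (bp0 k x) = bp k (iota x).
Proof.
suff iota_iter f g : (forall y, iota (f y) = g (iota y)) ->
    forall j, iota (iter j f x) = iter j g (iota x).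
  by case: k => j; apply: iota_iter; [apply: iota_b | apply: iota_bi].
by move=> hfg; elim=> //= j <-.
Qed.

Lemma iota_tval y0 y1 : pa_t a0 y0 = Some y1 -> tval (iota y0) = iota y1.
Proof. by move/iota_t; rewrite (tvalP sat) => -[]. Qed.

Lemma old_v_iota u : oldv (iota u).
Proof. by exists u; apply: same_orbit_refl. Qed.

Lemma old_vP y : oldv y -> exists u, y = iota u.
Proof. by case=> y0 [k hk]; exists (bp0 (- k) y0); rewrite iota_bpow hk bpK. Qed.

Lemma old_v_orbit x y : oldv x -> so x y -> oldv y.
Proof. by case=> y0 hx hxy; exists y0; apply: same_orbit_trans (same_orbit_sym hxy) hx. Qed.

Lemma new_v_orbit x y : newv x -> so x y -> newv y.
Proof. by move=> hx hxy /old_v_orbit/(_ (same_orbit_sym hxy)). Qed.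

Lemma walk_iota x w y : walk a0 x w y -> walk a (iota x) w (iota y).
Proof.
elim=> [x1|x1 l x2 w1 y1 hs _ IH]; first exact: walk_nil.
apply: walk_cons IH; case: l hs => /= [->|->||];
  by [rewrite iota_b | rewrite iota_bi | apply: iota_t].
Qed.

Lemma new_conn_orbit x x' y : so x x' -> new_conn a iota x' y -> new_conn a iota x y.
Proof.
move=> hx hc; elim: hc x hx => [x1 y1 h|x1 e y1 hv h1 h2 h3 _] x hx.
  exact/nc_refl/(same_orbit_trans hx h).
exact: nc_step hv (same_orbit_trans hx h1) h2 h3.
Qed.

Lemma new_conn_walk w x : all_visited sat newv x w -> new_conn a iota x (ep x w).
Proof.
elim: w x => [|l w IH] x /= [hx hw]; first exact/nc_refl/same_orbit_refl.
have {}IH := IH _ hw; case hl: (is_t l).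
  2: exact: new_conn_orbit (same_orbit_actl _ _ (negbT hl)) IH.
apply: (@nc_step _ _ _ _ _ _ _ (letter_edge sat x l)); first exact: valid_edgeT.
- by rewrite orig_letter_edge //; apply: same_orbit_refl.
- by rewrite targ_letter_edge //; apply: all_visited_head hw.
- by rewrite targ_letter_edge.
Qed.

Lemma new_conn_act x y : new_conn a iota x y -> exists w, ep x w = y.
Proof.
elim=> [x1 y1 [k ->]|x1 [[] z] y1 _ [k hk] _ _ [w hw]].
- by exists (powb k); rewrite act_powb.
- by exists (powb k ++ Lt :: w); rewrite act_cat act_powb -hk.
- exists (powb k ++ Lti :: w); rewrite act_cat act_powb -hk /= -hw.
  by rewrite /targ /= tvalK.
Qed.

Lemma old_edge x : oldv x -> oldv (tval x) ->
  exists y0, in_dom (pa_t a0) y0 /\ edge_eq a (true, x) (true, iota y0).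
Proof. by case: H => _ [_ [h _]] hx hx'; apply: h => //; apply: proj1 (sat x). Qed.

Lemma forest_acyclic e es : rpath a e es -> newv (orig a e) ->
  allS (fun f => newv (targ a f)) (e :: es) -> ~ so (targ a (last e es)) (orig a e).
Proof. by case: H => _ [_ [_ [h _]]]; apply/h/valid_edgeT. Qed.

Lemma attach_edge v : newv v ->
  exists e, valid_edge a e /\ oldv (orig a e) /\ new_conn a iota v (targ a e).
Proof. by case: H => _ [_ [_ [_ [h _]]]] /h []. Qed.

Lemma attach_edge_unique v e e' : newv v -> oldv (orig a e) -> oldv (orig a e') ->
  new_conn a iota v (targ a e) -> new_conn a iota v (targ a e') -> edge_eq a e e'.
Proof. by case: H => _ [_ [_ [_ [h _]]]] /h [_ h2]; apply: h2; apply: valid_edgeT. Qed.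

Lemma label_period_dvd e es : rpath a e es -> oldv (orig a e) ->
  allS (fun f => newv (targ a f)) (e :: es) ->
  forall j, bp j (targ a (last e es)) = targ a (last e es) ->
    ((if (last e es).1 then m else n) %| j)%Z.
Proof.
case: H => _ [_ [_ [_ [_ h]]]] hr ho hall.
by have [] := h e es (valid_edgeT sat e) hr ho hall; apply: child_period_dvd.
Qed.


Lemma excursion_not_reduced E w q : all_visited sat newv q w -> so q (ep q w) ->
  walk_edges sat q w <> [::] -> ~ rpath a E (walk_edges sat q w).
Proof.
move=> hw hq; case Ew: (walk_edges sat q w) => [//|f fs] _ [_ [_ [_ hr]]].
have [w0 [l [w' [ew hw0 hl ef _]]]] := walk_edges_head Ew.
have ho : orig a f = ep q w0 by rewrite ef orig_letter_edge.
apply: (forest_acyclic hr).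
- by move: hw; rewrite ho ew => /all_visited_cat [_ h]; apply: all_visited_head h.
- by rewrite -Ew; apply: all_visited_targ hw.
- rewrite ho; apply: same_orbit_trans (walk_edges_last Ew) _.
  exact: same_orbit_trans (same_orbit_sym hq) (tfree_same_orbit _ _ hw0).
Qed.

Lemma backtrack_reduce E w q : all_visited sat newv q w -> oldv (orig a E) ->
  so (targ a E) q -> ~ rpath a E (walk_edges sat q w) ->
  exists w', [/\ (count is_t w' < count is_t w)%N, ep q w' = ep q w,
    all_visited sat newv q w' & w ≡ w'].
Proof.
move=> hw hE hEq hnr.
case: (first_backtrack hEq hnr) => [[wb [l2 [w2 [ew _ hl2 he]]]] |
    [w1 [l1 [wb [l2 [w2 [ew hwb /andP [hl1 hl2] hrp he]]]]]]].
  (* a backtrack over E itself would lead back to an old vertex *)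
  exfalso; have := edge_eq_targ sat he; rewrite targ_opp targ_letter_edge // => hs.
  move: hw; rewrite ew -cat1s catA => /all_visited_cat [h _].
  by have := all_visited_last h; rewrite act_cat; apply; apply: old_v_orbit hE hs.
set p1 := ep q w1.
have ew' : w = (w1 ++ [:: l1]) ++ (wb ++ l2 :: w2) by rewrite ew -catA.
have hw1 : all_visited sat newv q (w1 ++ [:: l1]).
  by move: hw; rewrite ew' => /all_visited_cat [].
have hall : allS (fun f => newv (targ a f)) (E :: walk_edges sat q (w1 ++ [:: l1])).
  split; [exact: new_v_orbit (all_visited_head hw) (same_orbit_sym hEq) |
          exact: all_visited_targ hw1].
have hlast : last E (walk_edges sat q (w1 ++ [:: l1])) = letter_edge sat p1 l1.
  by rewrite walk_edges_cat /= hl1 last_cat.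
(* E followed by the path up to l1 is reduced and leaves BS(alpha0), so the
   label rule applies to the edge of l1 *)
have hd := label_period_dvd hrp hE hall; rewrite hlast in hd.
rewrite (tfree_act sat _ hwb) in he.
have [j0 [h1 h2]] := backtrack hl1 hl2 he hd.
exists (w1 ++ powb j0 ++ w2); split.
- rewrite ew !count_cat /= count_cat /= hl1 hl2.
  by rewrite (tfree_count hwb) (tfree_count (tfree_powb _)); lia.
- by rewrite ew !act_cat /= act_cat act_powb -h1 (tfree_act sat _ hwb).
- move: hw; rewrite ew => /all_visited_cat [hq /= [hp1]].
  move=> /all_visited_cat [_ /= [_ h]]; apply/all_visited_cat; split=> //.
  apply/all_visited_cat; split.
    by apply: all_visited_tfree (tfree_powb _) => y; apply: new_v_orbit hp1.
  by rewrite act_powb -h1 -(tfree_act sat _ hwb).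
- rewrite ew; apply: bs_catr.
  have -> : l1 :: wb ++ l2 :: w2 = (l1 :: wb ++ [:: l2]) ++ w2 by rewrite /= -catA.
  apply/bs_catl/(bs_trans _ h2)/bs_cons/bs_catl; exact: tfree_bs.
Qed.

Lemma excursion_powb E w q : all_visited sat newv q w -> so q (ep q w) ->
  oldv (orig a E) -> so (targ a E) q -> exists j, ep q w = bp j q /\ w ≡ powb j.
Proof.
move=> + + hE hEq; have [N] := ubnP (count is_t w); elim: N w => // N IH w.
rewrite ltnS => hN hw hq; case Ew: (walk_edges sat q w) => [|f fs].
  have hwt := walk_edges_nil Ew.
  by exists (bsum w); split; [apply: tfree_act | apply: tfree_bs].
have hnr : ~ rpath a E (walk_edges sat q w) by apply: excursion_not_reduced; rewrite ?Ew.
have [w' [hc hep hw' hb]] := backtrack_reduce hw hE hEq hnr.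
have hq' : so q (ep q w') by rewrite hep.
have [j [hj hbj]] := IH w' (leq_trans hc hN) hw' hq'.
by exists j; split; [rewrite -hep | apply: bs_trans hb hbj].
Qed.

Lemma first_exit w z : newv z -> oldv (ep z w) ->
  exists w1 l2 w2,
    [/\ w = w1 ++ l2 :: w2, all_visited sat newv z w1 & oldv (st (ep z w1) l2)].
Proof.
elim: w z => [|l w IH] z hz /= ho; first by case: (hz ho).
have [hs|hs] := classic (oldv (st z l)); first by exists [::], l, w.
have [w1 [l2 [w2 [-> h1 h2]]]] := IH _ hs ho.
by exists (l :: w1), l2, w2.
Qed.

(* The excursion leaves the forest through the edge opposite to the one it
   entered by, since its tree is attached by a single pair of edges. *)
Lemma excursion_exit l w u v : is_t l -> newv (st (iota u) l) ->
  ep (iota u) (l :: w) = iota v ->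
  exists j0 w2, [/\ (size w2 < size (l :: w))%N, ep (iota (bp0 j0 u)) w2 = iota v &
    l :: w ≡ powb j0 ++ w2].
Proof.
move=> hl; set z := st (iota u) l => hz hv.
have hzw : oldv (ep z w) by have := old_v_iota v; rewrite -hv.
have [w1 [l2 [w2 [ew hw1 ho]]]] := first_exit hz hzw.
set q := ep z w1 in ho; have hq : newv q := all_visited_last hw1.
have hl2 : is_t l2.
  apply: contraTT isT => /(same_orbit_actl sat q) hs.
  by case: hq; apply: old_v_orbit ho (same_orbit_sym hs).
set E := letter_edge sat (iota u) l; set F := opp (letter_edge sat q l2).
have hoE : oldv (orig a E) by rewrite orig_letter_edge //; apply: old_v_iota.
have htE : targ a E = z by rewrite targ_letter_edge.
have htF : targ a F = q by rewrite targ_opp orig_letter_edge.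
have hEF : edge_eq a E F.
  apply: (attach_edge_unique hz hoE); rewrite ?htE ?htF.
  - by rewrite orig_opp targ_letter_edge.
  - exact/nc_refl/same_orbit_refl.
  - exact: new_conn_walk hw1.
have hzq : so z q by have := edge_eq_targ sat hEF; rewrite htE htF.
have hEz : so (targ a E) z by rewrite htE; apply: same_orbit_refl.
have [j [hj hbj]] := excursion_powb hw1 hzq hoE hEz.
have hEF' : edge_eq a (opp E) (letter_edge sat (bp j (st (iota u) l)) l2).
  by rewrite -hj; have := edge_eq_opp hEF; rewrite oppK.
have hd := @label_period_dvd E [::] I hoE (conj (new_v_orbit hz (same_orbit_sym hEz)) I).
have [j0 [h1 h2]] := backtrack hl hl2 hEF' hd.
exists j0, w2; split.
- by rewrite ew /= size_cat /=; lia.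
- by rewrite iota_bpow -h1 -hj -hv ew /= act_cat.
- have -> : l :: w = (l :: w1 ++ [:: l2]) ++ w2 by rewrite ew /= -catA.
  by apply/bs_catl/(bs_trans _ h2)/bs_cons/bs_catl.
Qed.

(* A t-edge between old orbits is a beta-translate of an edge of alpha0. *)
Lemma letter_to_a0 u l : ~~ is_t l \/ oldv (st (iota u) l) ->
  exists u' wl, [/\ walk a0 u wl u', st (iota u) l = iota u' & [:: l] ≡ wl].
Proof.
case: l => [_|_|[//|hz]|[//|hz]].
- by exists (pa_b a0 u), [:: Lb]; rewrite iota_b; split;
    [apply: walk_cons (walk_nil _ _) | | apply: bs_refl].
- by exists (pa_bi a0 u), [:: Lbi]; rewrite iota_bi; split;
    [apply: walk_cons (walk_nil _ _) | | apply: bs_refl].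
- have [y0 [[y1 hy1] [_ [k /= hk]]]] := old_edge (old_v_iota u) hz.
  have hy0 : y0 = bp0 (k * n) u by apply: iota_inj; rewrite iota_bpow.
  exists (bp0 (- (k * m)) y1), (powb (k * n) ++ Lt :: powb (- (k * m))); split.
  + apply: walk_cat (walk_powb _ _ _) _; rewrite -hy0.
    exact: (walk_cons (l := Lt) hy1 (walk_powb _ _ _)).
  + by rewrite iota_bpow -(iota_tval hy1) /= hk (tval_bpow_mul sat) bpK.
  + exact: Lt_conj.
- have hz' : oldv (tval (tinv sat (iota u))) by rewrite tinvK; apply: old_v_iota.
  have [y0 [[y1 hy1] [_ [k /= hk]]]] := old_edge hz hz'.
  have hy1' : y1 = bp0 (k * m) u.
    by apply: iota_inj; rewrite -(iota_tval hy1) /= hk (tval_bpow_mul sat) tinvK iota_bpow.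
  exists (bp0 (- (k * n)) y0), (powb (k * m) ++ Lti :: powb (- (k * n))); split.
  + apply: walk_cat (walk_powb _ _ _) _; rewrite -hy1'.
    exact: (walk_cons (l := Lti) hy1 (walk_powb _ _ _)).
  + by rewrite iota_bpow /= hk bpK.
  + exact: Lti_conj.
Qed.

Lemma walk_to_a0 w u v : ep (iota u) w = iota v -> exists w0, walk a0 u w0 v /\ w ≡ w0.
Proof.
have [N] := ubnP (size w); elim: N w u => // N IH [|l w] u /=; rewrite ltnS => hN hv.
  by exists [::]; rewrite (iota_inj hv); split; [apply: walk_nil | apply: bs_refl].
have [[hl hz]|hno] := classic (is_t l /\ newv (st (iota u) l)).
  have [j0 [w2 [hsz hv2 hb]]] := excursion_exit hl hz hv.
  have [w0 [hw0 hb0]] := IH w2 _ (leq_trans hsz hN) hv2.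
  exists (powb j0 ++ w0); split; first exact: walk_cat (walk_powb _ _ _) hw0.
  exact: bs_trans hb (bs_catr _ hb0).
have hl : ~~ is_t l \/ oldv (st (iota u) l).
  case: (boolP (is_t l)) => hl; [right | by left].
  by apply: NNPP => hz; apply: hno.
have [u' [wl [hwl hu' hbl]]] := letter_to_a0 hl.
have hv' : ep (iota u') w = iota v by rewrite -hu'.
have [w0 [hw0 hb0]] := IH w u' hN hv'.
by exists (wl ++ w0); split; [apply: walk_cat hwl hw0 | apply: bs_cat hbl hb0].
Qed.

Lemma stab_iota x0 g : stab a (iota x0) g <-> stab a0 x0 g.
Proof.
split; case=> w [hw hg]; last by exists w; split; [apply: walk_iota hw | apply: hg].
have [w0 [hw0 hb]] := walk_to_a0 (esym (proj1 (walk_act sat _ _ _) hw)).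
by exists w0; split; [apply: hw0 | apply: bs_trans hg hb].
Qed.

Lemma act_iota_surj x0 : transitive_pa a0 -> forall y, exists g, ep (iota x0) g = y.
Proof.
move=> htr.
have reach_old y : oldv y -> exists g, ep (iota x0) g = y.
  case/old_vP=> u ->; have [w hw] := htr x0 u.
  by exists w; apply/esym/(walk_act sat)/walk_iota.
move=> y; have [/reach_old //|hy] := classic (oldv y).
have [[[] z] [_ [he hc]]] := attach_edge hy; have [w hw] := new_conn_act hc;
  have [g hg] := reach_old _ he.
- exists (g ++ Lt :: winv w); apply: etrans (act_winv sat y w).
  by rewrite hw act_cat hg.
- exists (g ++ Lti :: winv w); apply: etrans (act_winv sat y w).
  by rewrite hw act_cat hg /= tvalK.
Qed.

End ForestSaturation.

Theorem mainTheorem12 (m n : int) (hm : (2 <= absz m)%N) (hn : (2 <= absz n)%N)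
  (X0 X : Type) (a0 : preaction m n X0) (x0 : X0) (a : preaction m n X)
  (iota : X0 -> X) :
  transitive_pa a0 ->
  max_forest_saturation a0 a iota ->
  (forall g, stab a (iota x0) g <-> stab a0 x0 g) /\
  exists phi : seq letter -> X,
    phi [::] = iota x0 /\
    (forall g l, walk a (phi g) [:: l] (phi (rcons g l))) /\
    (forall g g', phi g = phi g' <-> stab a0 x0 (g ++ winv g')) /\
    (forall y, exists g, phi g = y).
Proof.
move=> htr H.
split=> [g|]; first exact: stab_iota H x0 g.
pose sat := proj1 H; exists (act sat (iota x0)); split=> //; split.
  by move=> g l; apply/(walk_act sat); rewrite -cats1 act_cat.
split; last exact: act_iota_surj H x0 htr.
move=> g g'; rewrite -(stab_iota H x0); split=> [e|[w [/(walk_act sat) hw hb]]].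
  exists (g ++ winv g'); split; last exact: bs_refl.
  by apply/(walk_act sat); rewrite act_cat e act_winv.
have : act sat (iota x0) (g ++ winv g') = iota x0 by rewrite (act_bs_eq sat hb) -hw.
by rewrite act_cat => e; rewrite -{2}e act_winvV.
Qed.
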